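(* Let $X, Y$ be Polish spaces equipped with Borel probability measures $\mu$ and $\nu$, and let $c: X\times Y\to[0,\infty]$ be Borel measurable. Then $P^{\mathrm{rel}}\ge D$.
   Context: For $0\le\varepsilon\le1$, let $\Pi^{\varepsilon}(\mu,\nu)$ be the set of non-negative Borel measures $\pi$ on $X\times Y$ with total mass $\pi(X\times Y)\ge 1-\varepsilon$ whose marginals satisfy $p_X(\pi)\le\mu$ and $p_Y(\pi)\le\nu$. Set $P^{\varepsilon}=\inf\{\int c\,d\pi : \pi\in\Pi^{\varepsilon}(\mu,\nu)\}$ and $P^{\mathrm{rel}}=\lim_{\varepsilon\to0}P^{\varepsilon}$. Let $D=\sup\{\int_X\varphi\,d\mu+\int_Y\psi\,d\nu\}$, where the supremum runs over all $\mu$-integrable $\varphi:X\to[-\infty,\infty)$ and $\nu$-integrable $\psi:Y\to[-\infty,\infty)$ with $\varphi(x)+\psi(y)\le c(x,y)$ for all $(x,y)\in X\times Y$. *)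

From HB Require Import structures.
From mathcomp Require Import all_boot all_order all_algebra.
From mathcomp Require Import all_classical all_reals all_analysis.
From mathcomp Require Import measurable_realfun.
Set Implicit Arguments. Unset Strict Implicit. Unset Printing Implicit Defensive.
Import Order.TTheory GRing.Theory Num.Theory.
Local Open Scope classical_set_scope.
Local Open Scope ring_scope.

(* A Polish space, presented through a compatible complete metric:
   a complete (pseudo)metric space which is Hausdorff (hence metric)
   and separable (has a countable dense subset). *)
Definition polish (R : realType) (T : completePseudoMetricType R) : Prop :=
  hausdorff_space T /\ exists S : set T, countable S /\ dense S.

Notation Borel T := (g_sigma_algebraType (@open T)).

Local Open Scope ereal_scope.

Section OT.
Context {R : realType} {dX dY : measure_display}
  {X : measurableType dX} {Y : measurableType dY}.

Definition PiEps (mu : {measure set X -> \bar R}) (nu : {measure set Y -> \bar R})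
  (eps : R) : set {measure set (X * Y)%type -> \bar R} :=
  [set pi | (1 - eps)%:E <= pi setT /\
     (forall A : set X, measurable A -> pi (A `*` setT) <= mu A) /\
     (forall B : set Y, measurable B -> pi (setT `*` B) <= nu B)].

Definition Peps (mu : {measure set X -> \bar R}) (nu : {measure set Y -> \bar R})
  (c : (X * Y)%type -> \bar R) (eps : R) : \bar R :=
  ereal_inf [set \int[pi]_z c z | pi in PiEps mu nu eps].

Definition Prel (mu : {measure set X -> \bar R}) (nu : {measure set Y -> \bar R})
  (c : (X * Y)%type -> \bar R) : \bar R :=
  lim (Peps mu nu c eps @[eps --> 0^'+]).

Definition Dual (mu : {measure set X -> \bar R}) (nu : {measure set Y -> \bar R})
  (c : (X * Y)%type -> \bar R) : \bar R :=
  ereal_sup [set r | exists (phi : X -> \bar R) (psi : Y -> \bar R),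
     [/\ mu.-integrable setT phi /\ (forall x, phi x != +oo),
         nu.-integrable setT psi /\ (forall y, psi y != +oo),
         (forall x y, phi x + psi y <= c (x, y)) &
         r = \int[mu]_x phi x + \int[nu]_y psi y]].
End OT.

(* Let (phi, psi) be admissible dual potentials and pi in
   Pi^eps(mu, nu).  The marginals of pi are submeasures of mu and nu of mass
   at least 1 - eps, and against such a submeasure m an integrable f satisfies
   \int f dm >= \int f dmu - delta - M eps, where M truncates the positive part
   of f so that \int min(f^+, M) dmu is within delta of \int f^+ dmu.  Hence
   \int c dpi >= \int (phi + psi) dpi >= \int phi dmu + \int psi dnu - 2 delta
   - (M_phi + M_psi) eps, and letting eps, then delta, go to 0 gives D <= P^rel. *)
From HB Require Import structures.
From mathcomp Require Import all_boot all_order all_algebra.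
From mathcomp Require Import all_classical all_reals all_analysis.
From mathcomp Require Import measurable_realfun.
From mathcomp Require Import lra.
Import Order.TTheory GRing.Theory Num.Theory.
Local Open Scope classical_set_scope.
Local Open Scope ring_scope.
Local Open Scope ereal_scope.

Section submeasure.
Context {R : realType} {d} {T : measurableType d}.
Context {mu m : {measure set T -> \bar R}}.
Hypothesis le_m_mu : forall A, measurable A -> m A <= mu A.

Lemma le_measure_integrable {f} : mu.-integrable setT f -> m.-integrable setT f.
Proof.
move=> /integrableP [mf fi]; apply/integrableP; split => //.
apply: le_lt_trans fi; apply: ge0_le_measure_integral => //.
exact: measurableT_comp.
Qed.

Context {eps : R}.
Hypotheses (mu1 : mu setT = 1) (m_ge : (1 - eps)%:E <= m setT).

(* Compare the integrals of the complement M - h, on which m <= mu applies. *)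
Lemma bounded_integral_submeasure_ge h (M : R) : (0 <= M)%R ->
  measurable_fun setT h -> (forall x, 0 <= h x) -> (forall x, h x <= M%:E) ->
  \int[mu]_x h x - (M * eps)%:E <= \int[m]_x h x.
Proof.
move=> M0 mh h0 hM.
set g := fun x => M%:E - h x.
have g0 x : 0 <= g x by rewrite /g subre_ge0.
have mg : measurable_fun setT g.
  by apply: emeasurable_funB => //; exact: measurable_cst.
have hg x : h x + g x = M%:E.
  by rewrite /g addeC subeK// ge0_fin_numE// (le_lt_trans (hM x)) ?ltry.
have mT : m setT <= 1 by rewrite -mu1 le_m_mu.
have Em : \int[m]_x h x + \int[m]_x g x = M%:E * m setT.
  by rewrite -ge0_integralD//; under eq_integral do rewrite hg; rewrite integral_cst.
have Emu : \int[mu]_x h x + \int[mu]_x g x = M%:E.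
  rewrite -ge0_integralD//; under eq_integral do rewrite hg.
  by rewrite integral_cst// mu1 mule1.
have gle : \int[m]_x g x <= \int[mu]_x g x by exact: ge0_le_measure_integral.
have mfin : m setT \is a fin_num by rewrite ge0_fin_numE// (le_lt_trans mT) ?ltey.
have /andP[f1 f2] : (\int[m]_x h x \is a fin_num) && (\int[m]_x g x \is a fin_num).
  by rewrite -fin_numD Em fin_numM.
have /andP[f3 f4] : (\int[mu]_x h x \is a fin_num) && (\int[mu]_x g x \is a fin_num).
  by rewrite -fin_numD Emu.
move: Em Emu gle m_ge.
rewrite -(fineK f1) -(fineK f2) -(fineK f3) -(fineK f4) -(fineK mfin).
move: (fine _) (fine _) (fine _) (fine _) (fine _) => a1 a2 a3 a4 a5.
rewrite -EFinN -!EFinD -EFinM !lee_fin => -[E1] [E2] H1 H2.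
nra.
Qed.

Lemma integral_submeasure_ge_trunc f (M : R) : (0 <= M)%R ->
  mu.-integrable setT f ->
  \int[mu]_x mine (f^\+ x) M%:E - (M * eps)%:E - \int[mu]_x f^\- x
    <= \int[m]_x f x.
Proof.
move=> M0 intf.
have mf : measurable_fun setT f by case/integrableP: intf.
pose h x := mine (f^\+ x) M%:E.
have h0 x : 0 <= h x by rewrite le_min lee_fin M0 andbT.
have mh : measurable_fun setT h.
  by apply: measurable_mine; [exact: measurable_funepos|exact: measurable_cst].
rewrite [leRHS]integralE; apply: leeB.
  apply: le_trans (bounded_integral_submeasure_ge _ _ M0 mh h0 _) _.
    by move=> x; rewrite ge_min lexx orbT.
  apply: ge0_le_integral => //; first exact: measurable_funepos.
  by move=> x _; rewrite ge_min lexx.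
by apply: ge0_le_measure_integral => //; exact: measurable_funeneg.
Qed.

End submeasure.

(* Monotone convergence for the truncations min(f^+, n). *)
Lemma integral_mine_funepos_gt {R : realType} {d} {T : measurableType d}
    {mu : {measure set T -> \bar R}} {f} {delta : R} : (0 < delta)%R ->
  mu.-integrable setT f -> (forall x, f x != +oo) ->
  exists n : nat, \int[mu]_x f^\+ x - delta%:E < \int[mu]_x mine (f^\+ x) n%:R%:E.
Proof.
move=> delta0 intf fnoo.
have mf : measurable_fun setT f by case/integrableP: intf.
pose u n x := mine (f^\+ x) n%:R%:E.
have mu_ n : measurable_fun setT (u n).
  by apply: measurable_mine; [exact: measurable_funepos|exact: measurable_cst].
have u0 n x : setT x -> 0 <= u n x by move=> _; rewrite /u le_min lee_fin ler0n andbT.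
have ndu x : setT x -> {homo u^~ x : n k / (n <= k)%N >-> n <= k}.
  by move=> _ n k nk; rewrite /u le_min !ge_min lexx /= lee_fin ler_nat nk orbT.
have lim_u x : limn (u^~ x) = f^\+ x.
  have fin : f^\+ x \is a fin_num.
    by rewrite ge0_fin_numE// funeposE gt_max ltey fnoo ltry.
  apply/cvg_lim => //; apply: cvg_near_cst.
  exists (Num.Def.archi_bound (fine (f^\+ x))) => // k /= Nk.
  rewrite /u; apply/min_idPl; rewrite -(fineK fin) lee_fin.
  apply: le_trans (ltW (archi_boundP _)) _; first exact: fine_ge0.
  by rewrite ler_nat.
have ndI : {homo (fun n => \int[mu]_x u n x) : n k / (n <= k)%N >-> n <= k}.
  move=> n k nk; apply: ge0_le_integral => // x _; [exact: u0|exact: ndu].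
have MCT : \int[mu]_x f^\+ x = ereal_sup (range (fun n => \int[mu]_x u n x)).
  rewrite -(cvg_lim _ (ereal_nondecreasing_cvgn ndI)) //.
  rewrite -(monotone_convergence mu measurableT mu_ u0 ndu).
  by apply: eq_integral => x _; rewrite lim_u.
have fin := integrable_pos_fin_num measurableT intf.
have : \int[mu]_x f^\+ x - delta%:E < ereal_sup (range (fun n => \int[mu]_x u n x)).
  by rewrite -MCT -(fineK fin) -EFinB lte_fin ltrBlDr ltrDl.
by move=> /ereal_sup_gt [_ [n _ <-] lt]; exists n.
Qed.

Lemma integral_submeasure_ge {R : realType} {d} {T : measurableType d}
    {mu : {measure set T -> \bar R}} {f} {delta : R} :
  mu setT = 1 -> (0 < delta)%R -> mu.-integrable setT f -> (forall x, f x != +oo) ->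
  exists M : R, (0 <= M)%R /\ forall (m : {measure set T -> \bar R}) (eps : R),
    (forall A, measurable A -> m A <= mu A) -> (1 - eps)%:E <= m setT ->
    \int[mu]_x f x - delta%:E - (M * eps)%:E <= \int[m]_x f x.
Proof.
move=> mu1 delta0 intf fnoo.
have mf : measurable_fun setT f by case/integrableP: intf.
have [n ltn] := integral_mine_funepos_gt delta0 intf fnoo.
exists n%:R; split=> [|m eps le_m_mu m_ge]; first exact: ler0n.
apply: le_trans (integral_submeasure_ge_trunc le_m_mu mu1 m_ge _ _ (ler0n _ n) intf).
have fp := integrable_pos_fin_num measurableT intf.
have fn := integrable_neg_fin_num measurableT intf.
have fh : \int[mu]_x mine (f^\+ x) n%:R%:E \is a fin_num.
  rewrite ge0_fin_numE; last by apply: integral_ge0 => x _; rewrite le_min lee_fin ler0n andbT.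
  apply: le_lt_trans (_ : \int[mu]_x f^\+ x < +oo); last by rewrite ltey_eq fp.
  apply: ge0_le_integral => //.
  - by move=> x _; rewrite le_min lee_fin ler0n andbT.
  - by apply: measurable_mine; [exact: measurable_funepos|exact: measurable_cst].
  - exact: measurable_funepos.
  - by move=> x _; rewrite ge_min lexx.
move: ltn; rewrite [\int[mu]_x f x]integralE -(fineK fp) -(fineK fn) -(fineK fh).
move: (fine _) (fine _) (fine _) => a1 a2 a3.
rewrite -!EFinB !lte_fin !lee_fin; lra.
Qed.

Definition pushforward_measure {R : realType} {d1 d2}
    {T1 : measurableType d1} {T2 : measurableType d2}
    (m : {measure set T1 -> \bar R}) {phi : T1 -> T2}
    (mphi : measurable_fun setT phi) : {measure set T2 -> \bar R}.
Proof. by refine (pushforward m phi : measure _ _). Defined.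

Lemma pushforward_measureE {R : realType} {d1 d2}
    {T1 : measurableType d1} {T2 : measurableType d2}
    (m : {measure set T1 -> \bar R}) {phi : T1 -> T2}
    (mphi : measurable_fun setT phi) A :
  pushforward_measure m mphi A = m (phi @^-1` A).
Proof. by []. Qed.

Lemma integrable_pushforward_comp {R : realType} {d1 d2}
    {T1 : measurableType d1} {T2 : measurableType d2}
    {m : {measure set T1 -> \bar R}} {phi : T1 -> T2}
    {mphi : measurable_fun setT phi} {f : T2 -> \bar R} :
  (pushforward_measure m mphi).-integrable setT f ->
  m.-integrable setT (f \o phi) /\
  \int[pushforward_measure m mphi]_y f y = \int[m]_x f (phi x).
Proof.
move=> /integrableP [mf fi].
have intf : m.-integrable setT (f \o phi).
  apply/integrableP; split; first exact: measurableT_comp.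
  apply: le_lt_trans fi; rewrite le_eqVlt; apply/orP; left; apply/eqP.
  by rewrite [RHS]ge0_integral_pushforward//; exact: measurableT_comp.
by split=> //; rewrite integral_pushforward.
Qed.

Section dual_le_relaxed_primal.
Context {R : realType} {dX dY : measure_display}
  {X : measurableType dX} {Y : measurableType dY}.
Variables (mu : {measure set X -> \bar R}) (nu : {measure set Y -> \bar R}).
Variable c : (X * Y)%type -> \bar R.

Lemma PiEps_le (e1 e2 : R) : (e1 <= e2)%R -> PiEps mu nu e1 `<=` PiEps mu nu e2.
Proof.
move=> e12 pi [pi_ge pi_marg]; split=> //.
by apply: le_trans pi_ge; rewrite lee_fin lerB.
Qed.

Lemma Peps_nonincreasing (e1 e2 : R) : (e1 <= e2)%R ->
  Peps mu nu c e2 <= Peps mu nu c e1.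
Proof.
move=> e12; apply/ereal_infP => _ [pi Ppi <-].
by apply: ereal_inf_lbound; exists pi => //; exact: PiEps_le Ppi.
Qed.

Lemma cvg_Peps : cvg (Peps mu nu c eps @[eps --> (0 : R)^'+]).
Proof.
apply: nonincreasing_at_right_is_cvge; apply: nearW => b e1 e2 _ _.
exact: Peps_nonincreasing.
Qed.

Hypotheses (mu1 : mu setT = 1) (nu1 : nu setT = 1).
Hypotheses (mc : measurable_fun setT c) (c0 : forall z, 0 <= c z).

Lemma PiEps_integral_ge {phi psi} {delta : R} : (0 < delta)%R ->
  mu.-integrable setT phi -> (forall x, phi x != +oo) ->
  nu.-integrable setT psi -> (forall y, psi y != +oo) ->
  (forall x y, phi x + psi y <= c (x, y)) ->
  exists M : R, (0 <= M)%R /\ forall eps pi, PiEps mu nu eps pi ->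
    \int[mu]_x phi x + \int[nu]_y psi y - delta%:E - (M * eps)%:E
      <= \int[pi]_z c z.
Proof.
move=> delta0 iphi phinoo ipsi psinoo hc.
have delta2 : (0 < delta / 2)%R by rewrite divr_gt0.
have [M1 [M10 geX]] := integral_submeasure_ge mu1 delta2 iphi phinoo.
have [M2 [M20 geY]] := integral_submeasure_ge nu1 delta2 ipsi psinoo.
exists (M1 + M2)%R; split; first exact: addr_ge0.
move=> eps pi [pi_ge [pi_X pi_Y]].
pose piX := pushforward_measure pi (@measurable_fst _ _ X Y).
pose piY := pushforward_measure pi (@measurable_snd _ _ X Y).
have le_piX A : measurable A -> piX A <= mu A.
  by move=> mA; rewrite pushforward_measureE -setXT; exact: pi_X.
have le_piY B : measurable B -> piY B <= nu B.
  by move=> mB; rewrite pushforward_measureE -setTX; exact: pi_Y.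
have [iphi_pi eX] := integrable_pushforward_comp (le_measure_integrable le_piX iphi).
have [ipsi_pi eY] := integrable_pushforward_comp (le_measure_integrable le_piY ipsi).
have := geX piX eps le_piX pi_ge; rewrite eX => leX.
have := geY piY eps le_piY pi_ge; rewrite eY => leY.
have [->|cfin] := eqVneq (\int[pi]_z c z) +oo; first exact: leey.
have ic : pi.-integrable setT c.
  apply/integrableP; split => //.
  by under eq_integral do rewrite gee0_abs//; rewrite ltey.
have le_c : \int[pi]_z (phi z.1 + psi z.2) <= \int[pi]_z c z.
  apply: le_integral => //; first exact: integrableD.
  by move=> [x y] _; exact: hc.
apply: le_trans le_c; rewrite integralD//; apply: le_trans (leeD leX leY).
move: (integrable_fin_num measurableT iphi) (integrable_fin_num measurableT ipsi).
move=> /fineK <- /fineK <-; rewrite -!EFinB -!EFinD lee_fin; nra.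
Qed.

Lemma Dual_le_Prel : Dual mu nu c <= Prel mu nu c.
Proof.
apply: ge_ereal_sup => _ [phi [psi [[iphi phinoo] [ipsi psinoo] hc ->]]].
apply/lee_addgt0Pr => delta delta0; rewrite -leeBlDr//.
have delta2 : (0 < delta / 2)%R by rewrite divr_gt0.
have [M [M0 geM]] := PiEps_integral_ge delta2 iphi phinoo ipsi psinoo hc.
apply: lime_ge; first exact: cvg_Peps.
have bound_gt0 : (0 < delta / (2 * (M + 1)))%R by rewrite divr_gt0// mulr_gt0// ltr_wpDl.
near=> eps.
have eps_gt0 : (0 < eps)%R by near: eps; exact: nbhs_right_gt.
have eps_lt : (eps < delta / (2 * (M + 1)))%R by near: eps; exact: nbhs_right_lt.
have Meps : (M * eps <= delta / 2)%R.
  rewrite ltr_pdivlMr ?mulr_gt0 ?ltr_wpDl// in eps_lt; nra.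
apply/ereal_infP => _ [pi Ppi <-]; apply: le_trans (geM eps pi Ppi).
move: (integrable_fin_num measurableT iphi) (integrable_fin_num measurableT ipsi).
move=> /fineK <- /fineK <-; rewrite -!EFinN -!EFinD lee_fin; lra.
Unshelve. all: by end_near.
Qed.

End dual_le_relaxed_primal.

Theorem proposition2p1 (R : realType)
  (X Y : completePseudoMetricType R) (hX : polish X) (hY : polish Y)
  (mu : probability (Borel X) R) (nu : probability (Borel Y) R)
  (c : (Borel X * Borel Y)%type -> \bar R)
  (mc : measurable_fun setT c) (c0 : forall z, 0 <= c z) :
  Dual mu nu c <= Prel mu nu c.
Proof. exact: Dual_le_Prel (probability_setT mu) (probability_setT nu) mc c0. Qed.
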